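(* Let $G$ be the digraph with vertex set $\{v_1,\dots,v_7\}$ and arc set $\{(v_1,v_4),(v_1,v_2),(v_2,v_4),(v_2,v_3),(v_3,v_4),(v_4,v_6),(v_4,v_5),(v_5,v_6),(v_6,v_7),(v_4,v_7)\}$. Then $G$ is an esp-digraph and $\chi_o(G)=7$. In particular, the bound $\chi_o(G)\le 7$ for esp-digraphs is best possible.
   Context: An oriented graph is a digraph without loops and without pairs of opposite arcs. For a digraph $G=(V,E)$ (parallel arcs allowed; the definitions apply verbatim), an oriented $r$-vertex-coloring is a map $c:V\to\{1,\dots,r\}$ such that (i) $c(u)\ne c(v)$ for every arc $(u,v)\in E$, and (ii) $c(u)\ne c(y)$ for every two arcs $(u,v),(x,y)\in E$ with $c(v)=c(x)$. Equivalently, $c$ is a homomorphism to an oriented graph on $r$ vertices. The oriented chromatic number $\chi_o(G)$ is the smallest $r$ for which such a coloring exists. Edge series-parallel (multi)digraphs (esp-digraphs) are defined recursively, each with a distinguished source and sink: (i) a digraph with two distinct vertices $u,v$ and the single arc $(u,v)$ is an esp-digraph with source $u$ and sink $v$; (ii) if $G_1,G_2$ are vertex-disjoint esp-digraphs, then the parallel composition $G_1\cup G_2$ (identify the source of $G_1$ with the source of $G_2$ and the sink of $G_1$ with the sink of $G_2$; arcs are united, possibly creating parallel arcs) is an esp-digraph with these identified source and sink, and the series composition $G_1\times G_2$ (identify the sink of $G_1$ with the source of $G_2$) is an esp-digraph with source the source of $G_1$ and sink the sink of $G_2$. *)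

From mathcomp Require Import all_boot.
Set Implicit Arguments. Unset Strict Implicit. Unset Printing Implicit Defensive.

(* Digraphs: a finite vertex type V with an arc list (a multiset of arcs,
   parallel arcs allowed). *)

Definition oriented_coloring (V : finType) (E : seq (V * V)) (r : nat)
    (c : V -> 'I_r) : Prop :=
  (forall u v, (u, v) \in E -> c u != c v) /\
  (forall u v x y, (u, v) \in E -> (x, y) \in E -> c v = c x -> c u != c y).

Definition has_oriented_coloring (V : finType) (E : seq (V * V)) (r : nat) :=
  exists c : V -> 'I_r, oriented_coloring E c.

Definition oriented_chromatic_number_is (V : finType) (E : seq (V * V)) (k : nat) :=
  has_oriented_coloring E k /\ (forall r, has_oriented_coloring E r -> k <= r).

(* Edge series-parallel digraphs, built from composition terms.  The digraph
   of a term has vertices 0 .. sp_n t - 1, source 0 and sink 1. *)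
Inductive sp_term := SPArc | SPPar of sp_term & sp_term | SPSer of sp_term & sp_term.

Fixpoint sp_n (t : sp_term) : nat :=
  match t with
  | SPArc => 2
  | SPPar a b => sp_n a + sp_n b - 2
  | SPSer a b => sp_n a + sp_n b - 1
  end.

Definition relab (f : nat -> nat) (e : nat * nat) := (f e.1, f e.2).

(* parallel: b's source/sink identified with 0/1; b's inner vertex k -> k + na - 2 *)
Definition par_relab_b (na : nat) (k : nat) :=
  if k < 2 then k else k + na - 2.
(* series: a's sink (1) and b's source (0) become the middle vertex na;
   a's inner vertices keep their labels, b's sink becomes 1,
   b's inner vertex k becomes k + na - 1. *)
Definition ser_relab_a (na : nat) (k : nat) :=
  if k == 1 then na else k.
Definition ser_relab_b (na : nat) (k : nat) :=
  if k == 0 then na else if k == 1 then 1 else k + na - 1.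

Fixpoint sp_arcs (t : sp_term) : seq (nat * nat) :=
  match t with
  | SPArc => [:: (0, 1)]
  | SPPar a b => sp_arcs a ++ map (relab (par_relab_b (sp_n a))) (sp_arcs b)
  | SPSer a b => map (relab (ser_relab_a (sp_n a))) (sp_arcs a)
                  ++ map (relab (ser_relab_b (sp_n a))) (sp_arcs b)
  end.

(* A digraph (V, E) is an esp-digraph iff it is isomorphic (as a multidigraph)
   to the digraph of some composition term. *)
Definition is_esp (V : finType) (E : seq (V * V)) : Prop :=
  exists (t : sp_term) (f : V -> 'I_(sp_n t)),
    bijective f /\
    perm_eq (map (fun e => (val (f e.1), val (f e.2))) E) (sp_arcs t).

(* The digraph G of the theorem; v_i is represented by i-1 : 'I_7. *)
Definition vG (i : nat) : 'I_7 := inord i.-1.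
Definition G_arcs : seq ('I_7 * 'I_7) :=
  [:: (vG 1, vG 4); (vG 1, vG 2); (vG 2, vG 4); (vG 2, vG 3); (vG 3, vG 4);
      (vG 4, vG 6); (vG 4, vG 5); (vG 5, vG 6); (vG 6, vG 7); (vG 4, vG 7)].

From mathcomp Require Import all_boot.
Set Implicit Arguments. Unset Strict Implicit. Unset Printing Implicit Defensive.

(* Series-parallel: G is the series composition of two copies (one mirrored)
   of the same 4-vertex pattern, so it is the digraph of an explicit
   composition term; we exhibit the term and the isomorphism.

   Chromatic number: call two vertices "close" when they are joined by an
   arc or by a directed path of length 2.  Condition (i) of an oriented
   colouring separates the ends of an arc and condition (ii), applied to two
   consecutive arcs u->w->y, separates the ends of a 2-path.  Hence in an
   "oriented clique" (all pairs of distinct vertices close) every oriented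
   colouring is injective and needs at least |V| colours.  Conversely, in a
   digraph without loops and opposite arcs, colouring every vertex by its own
   rank is an oriented |V|-colouring.  G is such an oriented clique on seven
   vertices, which gives chi_o(G) = 7. *)

Section OrientedClique.

Variable V : finType.
Variable E : seq (V * V).

Definition close (u y : V) : bool :=
  ((u, y) \in E) || has (fun e => (e.1 == u) && ((e.2, y) \in E)) E.

Definition oriented_clique : bool :=
  all (fun u => all (fun y => (u != y) ==> close u y || close y u) (enum V))
      (enum V).

Definition oriented_graph : bool :=
  all (fun e => (e.1 != e.2) && ((e.2, e.1) \notin E)) E.

Lemma oriented_coloring_close r (c : V -> 'I_r) u y :
  oriented_coloring E c -> close u y -> c u != c y.
Proof.
case=> arc_ne path_ne /orP[/arc_ne // | /hasP[[x w] xw /andP[/eqP/= <- wy]]].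
exact: path_ne xw wy erefl.
Qed.

Lemma oriented_clique_coloring_inj r (c : V -> 'I_r) :
  oriented_clique -> oriented_coloring E c -> injective c.
Proof.
move=> /allP clique col u y cu_cy; apply/eqP; apply: contraT => u_ne_y.
have /allP/(_ y (mem_enum _ y))/implyP/(_ u_ne_y) := clique u (mem_enum _ u).
by case/orP=> /(oriented_coloring_close col); rewrite cu_cy eqxx.
Qed.

Lemma oriented_clique_lower_bound r :
  oriented_clique -> has_oriented_coloring E r -> #|V| <= r.
Proof.
move=> clique [c col].
by rewrite -[r]card_ord; apply: leq_card (oriented_clique_coloring_inj clique col).
Qed.

Lemma oriented_graph_rank_coloring :
  oriented_graph -> oriented_coloring E (@enum_rank V).
Proof.
move=> /allP oriented; split=> [u v uv | u v x y uv xy /enum_rank_inj eq_vx].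
  have /andP[u_ne_v _] := oriented _ uv.
  by apply: contra u_ne_v => /eqP/enum_rank_inj ->.
have /andP[_ vu_notin] := oriented _ uv.
by apply: contra vu_notin => /eqP/enum_rank_inj /= ->; rewrite eq_vx.
Qed.

Lemma oriented_clique_chromatic_number :
  oriented_graph -> oriented_clique -> oriented_chromatic_number_is E #|V|.
Proof.
move=> oriented clique; split.
  by exists (@enum_rank V); exact: oriented_graph_rank_coloring.
by move=> r; exact: oriented_clique_lower_bound.
Qed.

End OrientedClique.

(* G = X x Y with X = (v1,v4) U ((v1,v2) x ((v2,v4) U ((v2,v3) x (v3,v4))))
   and Y = (v4,v7) U (((v4,v6) U ((v4,v5) x (v5,v6))) x (v6,v7)). *)
Definition X_term := SPPar SPArc (SPSer SPArc (SPPar SPArc (SPSer SPArc SPArc))).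
Definition Y_term := SPPar SPArc (SPSer (SPPar SPArc (SPSer SPArc SPArc)) SPArc).
Definition G_term := SPSer X_term Y_term.

(* Labels of v1..v7 (as 0..6) in the digraph of G_term, and the inverse. *)
Definition G_label (k : nat) : nat := nth 0 [:: 0; 2; 3; 4; 5; 6; 1] k.
Definition G_unlabel (k : nat) : nat := nth 0 [:: 0; 6; 1; 2; 3; 4; 5] k.

Definition G_iso (i : 'I_7) : 'I_(sp_n G_term) := inord (G_label i).
Definition G_iso_inv (i : 'I_(sp_n G_term)) : 'I_7 := inord (G_unlabel i).

Lemma G_iso_bijective : bijective G_iso.
Proof.
exists G_iso_inv => -[i lt_i]; apply/val_inj; rewrite /G_iso /G_iso_inv /=.
  by do 7?[case: i lt_i => [|i] lt_i //]; rewrite /= !inordK.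
by do 7?[case: i lt_i => [|i] lt_i //]; rewrite /= !inordK.
Qed.

Lemma G_is_esp : is_esp G_arcs.
Proof.
exists G_term, G_iso; split; first exact: G_iso_bijective.
by rewrite /G_arcs /G_iso /vG /= !inordK.
Qed.

(* Vertices of G as ordinals with a computable membership proof, so that the
   finite checks below reduce to closed boolean computations. *)
Definition ord7 (k : nat) : 'I_7 := Ordinal (ltn_pmod k (isT : 0 < 7)).

Lemma vG_ord7 i : i.-1 < 7 -> vG i = ord7 i.-1.
Proof. by move=> lt_i; apply/val_inj; rewrite /= inordK ?modn_small. Qed.

Lemma enum_ord7 : enum 'I_7 = map ord7 (iota 0 7).
Proof. by apply: (inj_map val_inj); rewrite val_enum_ord. Qed.

Lemma G_oriented_graph : oriented_graph G_arcs.
Proof. by rewrite /oriented_graph /G_arcs !vG_ord7. Qed.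

(* Every pair of vertices of G is joined by an arc or a directed 2-path;
   all 2-paths used go through v2, v4 or v6. *)
Lemma G_oriented_clique : oriented_clique G_arcs.
Proof. by rewrite /oriented_clique enum_ord7 /close /G_arcs !vG_ord7. Qed.

Theorem mainTheorem2 :
  is_esp G_arcs /\ oriented_chromatic_number_is G_arcs 7.
Proof.
split; first exact: G_is_esp.
have := oriented_clique_chromatic_number G_oriented_graph G_oriented_clique.
by rewrite card_ord.
Qed.
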